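(* Let ${\tt G}$ be a digraph and let $P$ be a downward closed (or upward closed) sub-poset of $SSG({\tt G})$. Then any two sign assignments $\epsilon,\epsilon'$ on $P$ are isomorphic, i.e. there is $\eta\colon P\to\mathbb Z_2$ with $\eta(x)+\epsilon'_{x,y}\equiv\epsilon_{x,y}+\eta(y)\pmod 2$ for every covering pair $x\,\tilde\triangleleft\,y$ in $P$.
   Context: A digraph ${\tt G}=(V,E)$ has finite $V$ and $E\subseteq(V\times V)\setminus\{(v,v)\}$. $SSG({\tt G})$ is the poset of spanning subgraphs of ${\tt G}$ (all vertices, any subset of edges) ordered by inclusion of edge sets. A sub-poset $P$ (with induced order) is downward closed if $h\le h'$ with $h'\in P$ implies $h\in P$, and upward closed if $h'\le h$ with $h'\in P$ implies $h\in P$. In a poset, $x\,\tilde\triangleleft\,y$ ($y$ covers $x$) means $x<y$ with nothing strictly between; a square is $x,y,y',z$ with $y\neq y'$, $x\,\tilde\triangleleft\,y\,\tilde\triangleleft\,z$, $x\,\tilde\triangleleft\,y'\,\tilde\triangleleft\,z$. A sign assignment assigns $\epsilon_{x,y}\in\mathbb Z_2$ to each covering pair such that $\epsilon_{x,y}+\epsilon_{y,z}\equiv\epsilon_{x,y'}+\epsilon_{y',z}+1\pmod 2$ for every square. *)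

From mathcomp Require Import all_boot all_order all_algebra.
Set Implicit Arguments. Unset Strict Implicit. Unset Printing Implicit Defensive.
Import GRing.Theory.
Local Open Scope ring_scope.

(* A digraph G = (V, E): V a finite type, E a set of ordered pairs with no loops. *)
Definition loopless (V : finType) (E : {set V * V}) : Prop :=
  forall v : V, (v, v) \notin E.

(* Spanning subgraphs of G are identified with their edge sets h \subset E;
   SSG(G) is ordered by inclusion. A sub-poset is a set P of such edge sets. *)
Definition subposet_SSG (V : finType) (E : {set V * V})
  (P : {set {set V * V}}) : Prop :=
  forall h : {set V * V}, h \in P -> h \subset E.

Definition downward_closed (V : finType) (E : {set V * V})
  (P : {set {set V * V}}) : Prop :=
  forall h h' : {set V * V}, h \subset E -> h \subset h' -> h' \in P -> h \in P.

Definition upward_closed (V : finType) (E : {set V * V})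
  (P : {set {set V * V}}) : Prop :=
  forall h h' : {set V * V}, h \subset E -> h' \subset h -> h' \in P -> h \in P.

Definition covers_in (V : finType) (P : {set {set V * V}}) (x y : {set V * V}) : Prop :=
  [/\ x \in P, y \in P, x \proper y &
      forall z : {set V * V}, z \in P -> x \proper z -> z \proper y -> False].

Definition square_in (V : finType) (P : {set {set V * V}}) (x y y' z : {set V * V}) : Prop :=
  [/\ y != y', covers_in P x y, covers_in P y z, covers_in P x y' & covers_in P y' z].

(* A sign assignment on P: a Z_2-valued function on pairs (only its values
   on covering pairs matter) satisfying the square condition. *)
Definition sign_assignment (V : finType) (P : {set {set V * V}})
  (eps : {set V * V} -> {set V * V} -> 'Z_2) : Prop :=
  forall x y y' z, square_in P x y y' z ->
    eps x y + eps y z = eps x y' + eps y' z + 1.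

Definition sign_iso (V : finType) (P : {set {set V * V}})
  (eps eps' : {set V * V} -> {set V * V} -> 'Z_2) : Prop :=
  exists eta : {set V * V} -> 'Z_2,
    forall x y, covers_in P x y -> eta x + eps' x y = eps x y + eta y.

From mathcomp Require Import all_boot all_order all_algebra.
Set Implicit Arguments. Unset Strict Implicit. Unset Printing Implicit Defensive.
Import GRing.Theory.
Local Open Scope ring_scope.

(* With delta := eps' - eps, the two square conditions cancel, so delta
   satisfies delta x y + delta y z = delta x y' + delta y' z on every square, and
   eta must be a potential for delta: eta y = eta x + delta x y on covering pairs.
   In a downward or upward closed P every covering pair is x < a |: x.  In the
   downward case define eta L by summing delta along the chain obtained by
   removing the elements of L one at a time; by induction on #|L| the order of
   removal is irrelevant, since two removal orders differ by squares
   L :\ a :\ b < L :\ a, L :\ b < L, all of which lie in P.  The upward case is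
   the same construction applied to the complements E :\: x. *)

Section Potential.
Variables (T : finType) (G : zmodType).
Variables (Q : {set T} -> Prop) (d : {set T} -> {set T} -> G).
Hypothesis Q_sub : forall A B : {set T}, A \subset B -> Q B -> Q A.
Hypothesis d_square : forall (M : {set T}) (a b : T),
  a != b -> a \notin M -> b \notin M -> Q (a |: (b |: M)) ->
  d M (a |: M) + d (a |: M) (a |: (b |: M)) =
  d M (b |: M) + d (b |: M) (a |: (b |: M)).

Fixpoint potential_rec (n : nat) (L : {set T}) : G :=
  if n is k.+1 then
    if [pick a in L] is Some a then potential_rec k (L :\ a) + d (L :\ a) L else 0
  else 0.

Definition potential (L : {set T}) : G := potential_rec #|L| L.

Lemma potential_recS (n : nat) (L : {set T}) : potential_rec n.+1 L =
  if [pick a in L] is Some a then potential_rec n (L :\ a) + d (L :\ a) L else 0.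
Proof. by []. Qed.

Lemma d_squareD1 (L : {set T}) (a b : T) : a != b -> a \in L -> b \in L -> Q L ->
  d (L :\ a :\ b) (L :\ b) + d (L :\ b) L =
  d (L :\ a :\ b) (L :\ a) + d (L :\ a) L.
Proof.
move=> nab aL bL QL; set M := L :\ a :\ b.
have aM : a \notin M by rewrite !inE eqxx andbF.
have bM : b \notin M by rewrite !inE eqxx.
have eLa : L :\ a = b |: M by rewrite setD1K // !inE eq_sym nab.
have eLb : L :\ b = a |: M.
  by rewrite /M setDDl (setUC [set a] [set b]) -setDDl setD1K // !inE nab.
have eL : L = a |: (b |: M) by rewrite -eLa setD1K.
by rewrite eLa eLb eL; apply: d_square; rewrite -?eL.
Qed.

Lemma potential_recD1 (n : nat) (L : {set T}) (a : T) :
  #|L| = n.+1 -> Q L -> a \in L ->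
  potential_rec n.+1 L = potential_rec n (L :\ a) + d (L :\ a) L.
Proof.
elim: n L a => [|n IH] L a cardL QL aL; rewrite potential_recS;
  (case: pickP => [b bL|/(_ a)]; last by rewrite aL);
  (have [-> //|nba] := eqVneq b a);
  have aLb : a \in L :\ b by rewrite !inE eq_sym nba.
  by move: cardL aLb; rewrite (cardsD1 b) bL => -[/cards0_eq ->]; rewrite inE.
have cardLb : #|L :\ b| = n.+1 by move: cardL; rewrite (cardsD1 b) bL => -[].
have cardLa : #|L :\ a| = n.+1 by move: cardL; rewrite (cardsD1 a) aL => -[].
have QLa : Q (L :\ a) by apply: Q_sub QL; apply: subD1set.
have QLb : Q (L :\ b) by apply: Q_sub QL; apply: subD1set.
have bLa : b \in L :\ a by rewrite !inE nba.
rewrite (IH _ a) // (IH (L :\ a) b) // -!addrA.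
by rewrite !setDDl (setUC [set b] [set a]) -setDDl d_squareD1 // eq_sym.
Qed.

Lemma potentialU1 (L : {set T}) (a : T) : a \notin L -> Q (a |: L) ->
  potential (a |: L) = potential L + d L (a |: L).
Proof.
move=> aL QaL; have cardaL : #|a |: L| = #|L|.+1 by rewrite cardsU1 aL.
by rewrite /potential cardaL (potential_recD1 cardaL QaL (setU11 a L)) setU1K.
Qed.

End Potential.

Lemma setDDK (T : finType) (A B : {set T}) : B \subset A -> A :\: (A :\: B) = B.
Proof. by move=> sBA; rewrite setDDr setDv set0U (setIidPr sBA). Qed.

Lemma setD_setU1 (T : finType) (A B : {set T}) (a : T) : a \in A -> a \notin B ->
  A :\: B = a |: (A :\: (a |: B)).
Proof. by move=> aA aB; rewrite (setUC [set a] B) -setDDl setD1K // inE aB aA. Qed.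

Section Covers.
Variables (V : finType) (P : {set {set V * V}}).
Local Notation edges := {set V * V}.

Definition order_convex :=
  forall x y z : edges, x \in P -> z \in P -> x \subset y -> y \subset z -> y \in P.

Lemma covers_inU1 (x : edges) (a : V * V) :
  a \notin x -> x \in P -> a |: x \in P -> covers_in P x (a |: x).
Proof.
move=> ax xP axP; have card_ax : #|a |: x| = #|x|.+1 by rewrite cardsU1 ax.
split=> //; first by rewrite properEcard subsetUr card_ax ltnSn.
by move=> z _ /proper_card ltxz /proper_card; rewrite card_ax ltnS leqNgt ltxz.
Qed.

Lemma covers_inP (x y : edges) : order_convex -> covers_in P x y ->
  exists2 a, a \notin x & y = a |: x.
Proof.
move=> P_convex [xP yP /properP [sxy [a ay ax]] no_between]; exists a => //.
have saxy : a |: x \subset y by rewrite subUset sub1set ay.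
apply/eqP; rewrite eq_sym eqEproper saxy /=; apply/negP => ltaxy.
apply: (no_between (a |: x)) => //; first exact: P_convex xP yP (subsetUr _ _) saxy.
by rewrite properEcard subsetUr cardsU1 ax ltnSn.
Qed.

Lemma square_inU2 (x : edges) (a b : V * V) :
  a != b -> a \notin x -> b \notin x ->
  x \in P -> a |: x \in P -> b |: x \in P -> a |: (b |: x) \in P ->
  square_in P x (a |: x) (b |: x) (a |: (b |: x)).
Proof.
move=> nab ax bx xP axP bxP abxP.
have abx : a \notin b |: x by rewrite !inE negb_or nab.
have bax : b \notin a |: x by rewrite !inE negb_or eq_sym nab.
split; try exact: covers_inU1.
- by apply: contraNneq abx => <-; rewrite setU11.
- have eab : a |: (b |: x) = b |: (a |: x) := setUCA _ _ _.
  by rewrite eab; apply: covers_inU1; rewrite // -eab.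
Qed.

End Covers.

Section ClosedSubposets.
Variables (V : finType) (E : {set V * V}) (P : {set {set V * V}}).
Hypothesis P_SSG : subposet_SSG E P.
Local Notation edges := {set V * V}.

Lemma downward_closed_convex : downward_closed E P -> order_convex P.
Proof.
by move=> down x y z _ zP _ syz; apply: down (subset_trans syz (P_SSG zP)) syz zP.
Qed.

Lemma upward_closed_convex : upward_closed E P -> order_convex P.
Proof.
by move=> up x y z xP zP sxy syz; apply: up (subset_trans syz (P_SSG zP)) sxy xP.
Qed.

Variables (G : zmodType) (d : edges -> edges -> G).
Hypothesis d_square : forall x y y' z : edges, square_in P x y y' z ->
  d x y + d y z = d x y' + d y' z.

Definition potential_for (eta : edges -> G) := forall (x : edges) (a : V * V),
  a \notin x -> x \in P -> a |: x \in P -> eta (a |: x) = eta x + d x (a |: x).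

Lemma downward_closed_potential : downward_closed E P -> exists eta, potential_for eta.
Proof.
move=> down.
have P_sub (A B : edges) : A \subset B -> B \in P -> A \in P.
  by move=> sAB BP; apply: down (subset_trans sAB (P_SSG BP)) sAB BP.
have P_square (M : edges) (a b : V * V) :
    a != b -> a \notin M -> b \notin M -> a |: (b |: M) \in P ->
    d M (a |: M) + d (a |: M) (a |: (b |: M)) =
    d M (b |: M) + d (b |: M) (a |: (b |: M)).
  move=> nab aM bM abMP; have P_subab A := P_sub A _ ^~ abMP.
  apply: d_square; apply: square_inU2; rewrite // P_subab //.
  - by rewrite subsetU // subsetUr orbT.
  - by rewrite setUS // subsetUr.
  - exact: subsetUr.
exists (potential d) => x a ax _ axP.
exact: (potentialU1 (Q := fun L => L \in P) P_sub P_square).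
Qed.

Lemma upward_closed_complement_square (M : edges) (a b : V * V) :
  upward_closed E P -> a != b -> a \notin M -> b \notin M ->
  a |: (b |: M) \subset E -> E :\: (a |: (b |: M)) \in P ->
  d (E :\: (a |: M)) (E :\: M) + d (E :\: (a |: (b |: M))) (E :\: (a |: M)) =
  d (E :\: (b |: M)) (E :\: M) + d (E :\: (a |: (b |: M))) (E :\: (b |: M)).
Proof.
move=> up nab aM bM sabME x0P; set x0 := E :\: (a |: (b |: M)).
have aE : a \in E by apply: (subsetP sabME); rewrite setU11.
have bE : b \in E by apply: (subsetP sabME); rewrite !inE eqxx orbT.
have eMa : E :\: (a |: M) = b |: x0.
  by rewrite (setD_setU1 bE) ?(setUCA [set b]) // !inE negb_or eq_sym nab.
have eMb : E :\: (b |: M) = a |: x0 by rewrite (setD_setU1 aE) // !inE negb_or nab.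
have eM : E :\: M = a |: (b |: x0) by rewrite (setD_setU1 aE) // eMa.
have ax0 : a \notin x0 by rewrite !inE eqxx.
have bx0 : b \notin x0 by rewrite !inE eqxx orbT.
have P_compl (A : edges) : A \subset a |: (b |: M) -> E :\: A \in P.
  by move=> sA; apply: up (subsetDl E A) (setDS E sA) x0P.
rewrite eMa eMb eM addrC [RHS]addrC; symmetry.
apply: d_square; apply: square_inU2 => //.
- by rewrite -eMb P_compl // subsetUr.
- by rewrite -eMa P_compl // setUS // subsetUr.
- by rewrite -eM P_compl // subsetU // subsetUr orbT.
Qed.

(* Chains are built downwards from E, so the potential of E :\: x is taken
   with a minus sign. *)
Lemma upward_closed_potential : upward_closed E P -> exists eta, potential_for eta.
Proof.
move=> up.
pose Q (L : edges) := L \subset E /\ E :\: L \in P.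
pose dc (L L' : edges) := d (E :\: L') (E :\: L).
have Q_sub (A B : edges) : A \subset B -> Q B -> Q A.
  move=> sAB [sBE BP]; split; first exact: subset_trans sAB sBE.
  exact: up (subsetDl E A) (setDS E sAB) BP.
have dc_square (M : edges) (a b : V * V) :
    a != b -> a \notin M -> b \notin M -> Q (a |: (b |: M)) ->
    dc M (a |: M) + dc (a |: M) (a |: (b |: M)) =
    dc M (b |: M) + dc (b |: M) (a |: (b |: M)).
  by move=> nab aM bM [sabME x0P]; apply: upward_closed_complement_square.
exists (fun x => - potential dc (E :\: x)) => x a ax xP axP.
have saxE : a |: x \subset E := P_SSG axP.
have sxE : x \subset E := P_SSG xP.
have aE : a \in E by apply: (subsetP saxE); rewrite setU11.
have sE : E :\: x = a |: (E :\: (a |: x)) := setD_setU1 aE ax.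
have Q_x : Q (E :\: x) by rewrite /Q subsetDl setDDK.
rewrite sE (potentialU1 Q_sub dc_square) -?sE //; last by rewrite !inE eqxx.
by rewrite /dc !setDDK // opprD addrNK.
Qed.

End ClosedSubposets.

Section SignAssignments.
Variables (V : finType) (P : {set {set V * V}}).
Variables (eps eps' : {set V * V} -> {set V * V} -> 'Z_2).
Local Notation delta := (fun x y => eps' x y - eps x y).

Lemma sign_assignment_diff_square : sign_assignment P eps -> sign_assignment P eps' ->
  forall x y y' z, square_in P x y y' z ->
  delta x y + delta y z = delta x y' + delta y' z.
Proof.
move=> eps_sign eps'_sign x y y' z sq.
rewrite addrACA -opprD (eps_sign _ _ _ _ sq) (eps'_sign _ _ _ _ sq).
by rewrite opprD addrACA subrr addr0 addrACA opprD.
Qed.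

Lemma sign_iso_of_potential (eta : {set V * V} -> 'Z_2) :
  order_convex P -> potential_for P delta eta -> sign_iso P eps eps'.
Proof.
move=> P_convex eta_pot; exists eta => x y xy.
have [a ax ey] := covers_inP P_convex xy; case: xy => xP yP _ _.
by rewrite ey (eta_pot x a) -?ey // addrCA [eps x _ + _]addrC subrK.
Qed.

End SignAssignments.

Theorem theorem3p16 (V : finType) (E : {set V * V}) (P : {set {set V * V}})
  (eps eps' : {set V * V} -> {set V * V} -> 'Z_2) :
  loopless E ->
  subposet_SSG E P ->
  (downward_closed E P \/ upward_closed E P) ->
  sign_assignment P eps -> sign_assignment P eps' ->
  sign_iso P eps eps'.
Proof.
move=> _ P_SSG P_closed eps_sign eps'_sign.
have d_square := sign_assignment_diff_square eps_sign eps'_sign.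
case: P_closed => [down|up].
- have [eta eta_pot] := downward_closed_potential P_SSG d_square down.
  exact: sign_iso_of_potential (downward_closed_convex P_SSG down) eta_pot.
- have [eta eta_pot] := upward_closed_potential P_SSG d_square up.
  exact: sign_iso_of_potential (upward_closed_convex P_SSG up) eta_pot.
Qed.
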